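(* Let $L/K$ be a finite totally ramified separable extension of degree $n>1$ with $\nu=v_p(n)$, let $\pi_K,\pi_L$ be uniformizers of $K,L$, and let $\hat{\mathcal{F}}(X)=\sum_{h\ge0}a_hX^{h+n}$ (with $a_h\in R$) be the unique series with $\hat{\mathcal{F}}(\pi_L)=\pi_K$. Then for every $0\le j\le\nu$ and every real $x\ge0$, \[ \phi_{L/K}^j(x)=\min\left\{h+v_L\left(\binom{h+n}{p^{j_0}}\right)+p^{j_0}x:\ 0\le j_0\le j,\ h\ge0,\ a_h\neq0\right\}. \]
   Context: Let $p$ be a prime and $K$ a field complete with respect to a discrete valuation whose residue field $\overline{K}$ is perfect of characteristic $p$ (the characteristic of $K$ may be $0$ or $p$). Fix a separable closure $K^{sep}$; $v_K$ is the valuation on $K^{sep}$ with $v_K(K^\times)=\mathbb{Z}$, and $R\subset\mathcal{O}_K$ is the set of Teichmüller representatives of $\overline{K}$. $v_p$ denotes the $p$-adic valuation on $\mathbb{Z}$. $L/K$ is a finite totally ramified subextension of $K^{sep}/K$; $v_L$ is the valuation on $K^{sep}$ with $v_L(L^\times)=\mathbb{Z}$ (so $v_L(0)=\infty$, and $v_L(p)=\infty$ if $\operatorname{char}K=p$). For $0\le j\le\nu$ put $\tilde{\imath}_j=\min\{h\ge0: v_p(h+n)\le j,\ a_h\ne0\}$ (or $\infty$ if no such $h$). The indices of inseparability are defined recursively by $i_\nu=0$ and $i_j=\min\{\tilde{\imath}_j,\,i_{j+1}+v_L(p)\}$ for $j=\nu-1,\dots,0$. For $x\in[0,\infty)$ define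 $\tilde{\phi}_{L/K}^j(x)=i_j+p^jx$ and $\phi_{L/K}^j(x)=\min\{\tilde{\phi}_{L/K}^{j_0}(x):0\le j_0\le j\}$. *)

From HB Require Import structures.
From mathcomp Require Import all_boot all_order all_algebra all_field.
From mathcomp Require Import boolp reals.
Set Implicit Arguments. Unset Strict Implicit. Unset Printing Implicit Defensive.
Import Order.TTheory GRing.Theory Num.Theory.
Local Open Scope ring_scope.

(** Extended values  T ∪ {+oo}, encoded as [option T] with [None] = +oo. *)
Section Ext.
Variable T : realDomainType.
Definition ele (a b : option T) : bool :=
  match a, b with
  | _, None => true
  | None, Some _ => false
  | Some x, Some y => x <= y
  end.
Definition eadd (a b : option T) : option T :=
  match a, b with Some x, Some y => Some (x + y) | _, _ => None end.
Definition emin (a b : option T) : option T :=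
  match a, b with
  | None, _ => b
  | _, None => a
  | Some x, Some y => Some (Num.min x y)
  end.
End Ext.

Definition is_dval (F : fieldType) (v : F -> option int) : Prop :=
  [/\ forall x, v x = None <-> x = 0,
      forall x y, v (x * y) = eadd (v x) (v y),
      forall x y, ele (emin (v x) (v y)) (v (x + y)),
      forall x, x != 0 -> exists z : int, v x = Some z
    & exists pi, v pi = Some 1].

Definition dv_complete (F : fieldType) (v : F -> option int) : Prop :=
  forall u : nat -> F,
    (forall N : int, exists M, forall m k, (M <= m)%N -> (M <= k)%N ->
        ele (Some N) (v (u m - u k))) ->
    exists l, forall N : int, exists M, forall m, (M <= m)%N ->
        ele (Some N) (v (u m - l)).

(** The residue field O_F / m_F is of characteristic p and perfect
    (p = 0 in the residue field, and Frobenius is surjective on it). *)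
Definition residue_perfect_char (F : fieldType) (v : F -> option int) (p : nat)
  : Prop :=
  [/\ prime p,
      ele (Some 1) (v p%:R)
    & forall x, ele (Some 0) (v x) ->
        exists y, ele (Some 0) (v y) /\ ele (Some 1) (v (y ^+ p - x))].

(** Teichmüller representatives: x ∈ O_F which is a p^k-th power in O_F
    for every k (Serre, Local Fields, II §4, Prop. 8). *)
Definition teichmuller (F : fieldType) (v : F -> option int) (p : nat) (x : F)
  : Prop :=
  ele (Some 0) (v x) /\
  forall k : nat, exists y, ele (Some 0) (v y) /\ y ^+ (p ^ k)%N = x.

Section Indices.
Variables (K : fieldType) (a : nat -> K) (n p : nat) (vLp : option int).

Definition nu := logn p n.

Definition itilde (j : nat) : option int :=
  match pselect (exists h, (logn p (h + n) <= j)%N && (a h != 0)) with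
  | left H => Some (Posz (ex_minn H))
  | right _ => None
  end.

(* irec k = i_(nu - k) : i_nu = 0, i_j = min(\tilde i_j, i_(j+1) + v_L(p)). *)
Fixpoint irec (k : nat) : option int :=
  match k with
  | 0 => Some 0
  | k'.+1 => emin (itilde (nu - k)) (eadd (irec k') vLp)
  end.

Definition iidx (j : nat) : option int := irec (nu - j).

Variable R : realType.

Definition phitilde (j : nat) (x : R) : option R :=
  omap (fun i : int => i%:~R + (p ^ j)%N%:R * x) (iidx j).

Definition phi (j : nat) (x : R) : option R :=
  foldr (@emin R) None [seq phitilde j0 x | j0 <- iota 0 j.+1].
End Indices.

From HB Require Import structures.
From mathcomp Require Import all_boot all_order all_algebra all_field.
From mathcomp Require Import boolp reals.
From mathcomp Require Import zify.
Set Implicit Arguments. Unset Strict Implicit. Unset Printing Implicit Defensive.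
Import Order.TTheory GRing.Theory Num.Theory.

(* Unwinding the recursion, i_k is the minimum, over the h with a_h <> 0, of
   h + max(0, v_p(h+n) - k) v_L(p).  Since v_L(p) >= 1, the valuation v_L of a
   natural number is its p-adic valuation times v_L(p), and for
   j0 <= v_p(h+n) the binomial coefficient binomial(h+n, p^j0) has p-adic
   valuation v_p(h+n) - j0.  So every term h + v_L(binomial(h+n, p^j0)) + p^j0 x
   dominates the value at x of the line i_k + p^k x with k = min(j0, v_p(h+n)),
   and the h realizing i_k gives a term equal to it.  That a_0 <> 0 follows
   from v_L(pi_K) = n. *)

Lemma eq_logn p m1 m2 : prime p -> 0 < m1 -> 0 < m2 ->
  (forall e, (p ^ e %| m1) = (p ^ e %| m2)) -> logn p m1 = logn p m2.
Proof.
move=> pp m1_gt0 m2_gt0 dvd_eq; apply/eqP; rewrite eqn_leq.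
have := dvd_eq (logn p m1); rewrite pfactor_dvdnn pfactor_dvdn // => /esym ->.
by have := dvd_eq (logn p m2); rewrite pfactor_dvdnn pfactor_dvdn // => ->.
Qed.

Lemma subn_minr m n : m - minn n m = m - n.
Proof. lia. Qed.

Lemma logn_subn_pfactor p k m j : prime p -> p ^ k %| m -> 0 < j < p ^ k ->
  j <= m -> logn p (m - j) = logn p j.
Proof.
move=> pp pk_m /andP[j_gt0 j_lt] j_le.
have pk_le : p ^ k <= m by apply: dvdn_leq; lia.
have j_eq : j = m - (m - j) by lia.
apply: eq_logn => //; first lia.
move=> e; have [e_le|e_gt] := leqP e k.
  have pe_m : p ^ e %| m by apply: dvdn_trans pk_m; apply: dvdn_exp2l.
  by apply/idP/idP => dvd_e; [rewrite j_eq|]; apply: dvdn_sub.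
have pk_lt : p ^ k < p ^ e by rewrite ltn_exp2l // prime_gt1.
apply/idP/idP => dvd_e; last by have := dvdn_leq j_gt0 dvd_e; lia.
have pk_mj : p ^ k %| m - j by apply: dvdn_trans dvd_e; apply/dvdn_exp2l/ltnW.
have : p ^ k %| j by rewrite j_eq; apply: dvdn_sub.
by move/(dvdn_leq j_gt0); lia.
Qed.

Lemma logn_ffact_pfactor p k m r : prime p -> p ^ k %| m -> 0 < m ->
  r < p ^ k -> logn p (m.-1 ^_ r) = logn p r`!.
Proof.
move=> pp pk_m m_gt0; have pk_le : p ^ k <= m by apply: dvdn_leq.
elim: r => [|r IHr] r_lt; first by rewrite ffactn0 logn1.
rewrite ffactnSr factS lognM ?ffact_gt0; [|lia|lia].
rewrite lognM ?fact_gt0 // IHr; last lia.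
have -> : m.-1 - r = m - r.+1 by lia.
by rewrite addnC (logn_subn_pfactor pp pk_m); lia.
Qed.

Lemma logn_bin_pfactor p k m : prime p -> 0 < m -> k <= logn p m ->
  logn p 'C(m, p ^ k) = logn p m - k.
Proof.
move=> pp m_gt0 k_le.
have pk_m : p ^ k %| m by rewrite pfactor_dvdn.
have pk_gt0 : 0 < p ^ k by rewrite expn_gt0 prime_gt0.
have pk_le : p ^ k <= m by apply: dvdn_leq.
have binE := mul_bin_diag m (p ^ k).-1; rewrite prednK // in binE.
have logn_bin_pred : logn p 'C(m.-1, (p ^ k).-1) = 0.
  have := congr1 (logn p) (bin_ffact m.-1 (p ^ k).-1).
  rewrite (logn_ffact_pfactor _ pk_m) // ?lognM ?fact_gt0 ?bin_gt0; lia.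
have := congr1 (logn p) binE.
rewrite lognM // ?bin_gt0; last lia.
by rewrite lognM ?bin_gt0 // logn_bin_pred pfactorK //; lia.
Qed.

Local Open Scope ring_scope.

Section ExtendedOrder.
Variable T : realDomainType.
Implicit Types a b c d : option T.

Lemma ele_refl a : ele a a.
Proof. by case: a => /=. Qed.

Lemma ele_trans a b c : ele a b -> ele b c -> ele a c.
Proof. by case: a; case: b; case: c => //= x y z; apply: le_trans. Qed.

Lemma ele_anti a b : ele a b -> ele b a -> a = b.
Proof. by case: a; case: b => //= x y le_yx le_xy; rewrite (@le_anti _ _ x y) ?le_xy. Qed.

Lemma ele_inf a : ele a None.
Proof. by case: a. Qed.

Lemma eminE a b : emin a b = a \/ emin a b = b.
Proof.
case: a => [x|]; case: b => [y|] /=; [|by left|by right|by left].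
by have [le_xy|/ltW le_yx] := lerP x y; [left|right]; congr Some.
Qed.

Lemma ele_eminl a b : ele (emin a b) a.
Proof. by case: a => [x|]; case: b => [y|] //=; rewrite ?ge_min ?lexx. Qed.

Lemma ele_eminr a b : ele (emin a b) b.
Proof. by case: a => [x|]; case: b => [y|] //=; rewrite ?ge_min ?lexx ?orbT. Qed.

Lemma ele_emin c a b : ele c a -> ele c b -> ele c (emin a b).
Proof. by case: a => [x|]; case: b => [y|]; case: c => [z|] //=; rewrite le_min => -> ->. Qed.

Lemma ele_eadd a b c d : ele a b -> ele c d -> ele (eadd a c) (eadd b d).
Proof. by case: a; case: b; case: c; case: d => //= x y z w; apply: lerD. Qed.

Lemma eaddA a b c : eadd a (eadd b c) = eadd (eadd a b) c.
Proof. by case: a; case: b; case: c => //= x y z; rewrite addrA. Qed.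

Lemma eaddC a b : eadd a b = eadd b a.
Proof. by case: a; case: b => //= x y; rewrite addrC. Qed.

Lemma eaddr0 a : eadd a (Some 0) = a.
Proof. by case: a => //= x; rewrite addr0. Qed.

Lemma eadd_ge0 a b : ele (Some 0) a -> ele (Some 0) b -> ele (Some 0) (eadd a b).
Proof. by case: a; case: b => //= x y; apply: addr_ge0. Qed.

Lemma ele_eaddr a b : ele (Some 0) b -> ele a (eadd a b).
Proof. by move=> b_ge0; rewrite -{1}(eaddr0 a); apply: ele_eadd; rewrite ?ele_refl. Qed.

Lemma foldr_emin_le (s : seq (option T)) a : a \in s -> ele (foldr (@emin T) None s) a.
Proof.
elim: s => // b s IHs; rewrite inE => /orP[/eqP->|a_s] /=; first exact: ele_eminl.
exact: ele_trans (ele_eminr _ _) (IHs a_s).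
Qed.

Lemma foldr_emin_mem (s : seq (option T)) : s != [::] -> foldr (@emin T) None s \in s.
Proof.
elim: s => // b [|c s] IHs _ /=; first by case: b => [?|]; rewrite /= mem_head.
have := IHs isT; rewrite /= => min_s.
by case: (eminE b (foldr (@emin T) None (c :: s))) => ->; rewrite inE ?eqxx ?min_s ?orbT.
Qed.
End ExtendedOrder.

(* l * e in Z ∪ {+oo}, with 0 * +oo = 0. *)
Fixpoint emuln (l : nat) (e : option int) : option int :=
  if l is l'.+1 then eadd (emuln l' e) e else Some 0.

Lemma emuln_ge0 l e : ele (Some 0) e -> ele (Some 0) (emuln l e).
Proof. by move=> e_ge0; elim: l => //= l IHl; apply: eadd_ge0. Qed.

Lemma ele_emuln l l' e : (l <= l')%N -> ele (Some 0) e -> ele (emuln l e) (emuln l' e).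
Proof.
move=> le_ll' e_ge0; elim: l' le_ll' => [|l' IHl']; first by rewrite leqn0 => /eqP->.
rewrite leq_eqVlt => /orP[/eqP->|]; first exact: ele_refl.
by rewrite ltnS => /IHl' le_l; apply: ele_trans le_l _; apply: ele_eaddr.
Qed.

Lemma emuln1 l : emuln l (Some 1) = Some l%:Z.
Proof. by elim: l => //= l ->; congr Some; lia. Qed.

Section DiscreteValuation.
Variables (F : fieldType) (v : F -> option int).
Hypothesis v_dval : is_dval v.

Lemma dv0 : v 0 = None.
Proof. by case: v_dval => v_inf _ _ _ _; apply/v_inf. Qed.

Lemma dvM x y : v (x * y) = eadd (v x) (v y).
Proof. by case: v_dval. Qed.

Lemma dvD x y : ele (emin (v x) (v y)) (v (x + y)).
Proof. by case: v_dval. Qed.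

Lemma dv_fin x : x != 0 -> exists z, v x = Some z.
Proof. by case: v_dval => _ _ _ v_fin _; apply: v_fin. Qed.

Lemma dv_sqr1 u : u * u = 1 -> v u = Some 0.
Proof.
move=> uu1; have [z1 z1E] := dv_fin (oner_neq0 F).
have z1_0 : z1 = 0 by move: (dvM 1 1); rewrite mulr1 z1E => -[]; lia.
have [z zE] : exists z, v u = Some z.
  by apply: dv_fin; apply: contra_eq_neq uu1 => ->; rewrite mul0r eq_sym oner_eq0.
by move: (dvM u u); rewrite uu1 zE z1E z1_0 => -[] zz; congr Some; lia.
Qed.

Lemma dv1 : v 1 = Some 0.
Proof. by apply: dv_sqr1; rewrite mulr1. Qed.

Lemma dvN x : v (- x) = v x.
Proof. by rewrite -mulN1r dvM dv_sqr1 ?mulrNN ?mulr1 //; case: (v x) => //= z; rewrite add0r. Qed.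

Lemma dvB x y : ele (emin (v x) (v y)) (v (x - y)).
Proof. by rewrite -(dvN y); apply: dvD. Qed.

Lemma dvX x l : v (x ^+ l) = emuln l (v x).
Proof. by elim: l => [|l IHl]; rewrite ?expr0 ?dv1 // exprSr dvM IHl. Qed.

Lemma dv_sum_ge I (r : seq I) (P : pred I) (f : I -> F) N :
  (forall i, P i -> ele N (v (f i))) -> ele N (v (\sum_(i <- r | P i) f i)).
Proof.
move=> f_ge; apply: (big_ind (fun y => ele N (v y))) => //; first by rewrite dv0 ele_inf.
by move=> y1 y2 y1_ge y2_ge; apply: ele_trans (dvD _ _); apply: ele_emin.
Qed.

Lemma dv_nat_ge0 c : ele (Some 0) (v c%:R).
Proof.
elim: c => [|c IHc]; first by rewrite dv0.
by rewrite -addn1 natrD; apply: ele_trans (dvD _ _); apply: ele_emin; rewrite ?dv1.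
Qed.

Lemma series_head_neq0 (b : nat -> F) (pi c : F) (n : nat) :
  v pi = Some 1 -> v c = Some n%:Z -> (forall h, ele (Some 0) (v (b h))) ->
  (forall N : int, exists H0, forall H, (H0 <= H)%N ->
     ele (Some N) (v (c - \sum_(h < H) b h * pi ^+ (h + n)))) ->
  b 0%N != 0.
Proof.
move=> vpi vc b_ge0 conv; apply/eqP => b0_eq0.
have [H0 /(_ H0 (leqnn _)) near_c] := conv n.+1%:Z.
set S := \sum_(h < H0) _ in near_c.
have S_ge : ele (Some n.+1%:Z) (v S).
  apply: dv_sum_ge => -[[|h] _] _ /=; first by rewrite b0_eq0 mul0r dv0.
  rewrite dvM dvX vpi emuln1; move: (b_ge0 h.+1); case: (v (b h.+1)) => //= z; lia.
have := dvD (c - S) S; rewrite subrK vc.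
by move/(ele_trans (ele_emin near_c S_ge)) => /=; lia.
Qed.

Variable p : nat.
Hypotheses (p_prime : prime p) (vp_ge1 : ele (Some 1) (v p%:R)).

(* By Bezout, 1 = u m - w p, so m cannot lie in the maximal ideal with p. *)
Lemma dv_nat_coprime m : (0 < m)%N -> coprime m p -> v m%:R = Some 0.
Proof.
move=> m_gt0 co_mp; have [u w bezout _] := egcdnP p m_gt0.
rewrite (eqP co_mp) in bezout.
have unit_comb : (u * m)%:R - (w * p)%:R = 1 :> F.
  by rewrite bezout natrD addrAC subrr add0r.
have vm_ge1 : ~ ele (Some 1) (v m%:R).
  move=> vm_ge1; have := dvB (u * m)%:R (w * p)%:R; rewrite unit_comb dv1.
  have ge1 k q : ele (Some 1) (v q%:R) -> ele (Some 1) (v (k * q)%:R).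
    by move=> q_ge1; rewrite natrM dvM -[Some 1]/(eadd (Some 0) (Some 1)) ele_eadd ?dv_nat_ge0.
  by move/(ele_trans (ele_emin (ge1 u _ vm_ge1) (ge1 w _ vp_ge1))).
move: (dv_nat_ge0 m) vm_ge1; case: (v m%:R) => [z|] /= z_ge0 vm_ge1; last by case: vm_ge1.
by congr Some; lia.
Qed.

Lemma dv_nat c : (0 < c)%N -> v c%:R = emuln (logn p c) (v p%:R).
Proof.
move=> c_gt0; have [m co_mp cE] := pfactor_coprime p_prime c_gt0.
have m_gt0 : (0 < m)%N by move: c_gt0; rewrite cE; case: m {cE co_mp}.
rewrite {1}cE natrM dvM dv_nat_coprime 1?coprime_sym //.
by rewrite natrX dvX eaddC /= eaddr0.
Qed.

Lemma dv_bin_pfactor m k : (0 < m)%N -> (k <= logn p m)%N ->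
  v ('C(m, p ^ k))%:R = emuln (logn p m - k) (v p%:R).
Proof.
move=> m_gt0 k_le; rewrite dv_nat ?logn_bin_pfactor // bin_gt0.
by apply: dvdn_leq; rewrite // pfactor_dvdn.
Qed.

End DiscreteValuation.

Section Indices.
Variables (K : fieldType) (a : nat -> K) (n p : nat) (e : option int).
Hypothesis e_ge0 : ele (Some 0) e.

Lemma itilde_le k h : (logn p (h + n) <= k)%N -> a h != 0 ->
  ele (itilde a n p k) (Some h%:Z).
Proof.
move=> h_le ah; rewrite /itilde; case: pselect => [ex|]; last first.
  by case; exists h; rewrite h_le ah.
by case: ex_minnP => m _ m_min; rewrite /= lez_nat m_min ?h_le.
Qed.

Lemma itildeP k : itilde a n p k = None \/
  exists h, [/\ a h != 0, (logn p (h + n) <= k)%N & itilde a n p k = Some h%:Z].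
Proof.
rewrite /itilde; case: pselect => [ex|_]; last by left.
by case: ex_minnP => m /andP[m_le am] _; right; exists m.
Qed.

Lemma iidx_nu : iidx a n p e (nu n p) = Some 0.
Proof. by rewrite /iidx subnn. Qed.

Lemma iidxS k : (k < nu n p)%N ->
  iidx a n p e k = emin (itilde a n p k) (eadd (iidx a n p e k.+1) e).
Proof.
move=> k_lt; rewrite /iidx; have -> : (nu n p - k = (nu n p - k.+1).+1)%N by lia.
by rewrite /=; congr (emin (itilde _ _ _ _) _); lia.
Qed.

Definition iidx_cand k h := eadd (Some h%:Z) (emuln (logn p (h + n) - k) e).

Lemma iidx_cand_ge0 k h : ele (Some 0) (iidx_cand k h).
Proof. exact: eadd_ge0 (emuln_ge0 _ e_ge0). Qed.

Lemma iidx_cand_S k h : (k < logn p (h + n))%N ->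
  iidx_cand k h = eadd (iidx_cand k.+1 h) e.
Proof. by move=> k_lt; rewrite /iidx_cand -eaddA -subnSK. Qed.

Lemma iidx_le_cand k h : (k <= nu n p)%N -> a h != 0 ->
  ele (iidx a n p e k) (iidx_cand k h).
Proof.
move=> + ah; move Ed : (nu n p - k)%N => d; elim: d k Ed => [|d IHd] k Ed k_le.
  have -> : k = nu n p by lia.
  by rewrite iidx_nu iidx_cand_ge0.
rewrite iidxS; last lia.
have [h_le|h_gt] := leqP (logn p (h + n)) k.
  apply: ele_trans (ele_eminl _ _) (ele_trans (itilde_le h_le ah) _).
  exact: ele_eaddr (emuln_ge0 _ e_ge0).
apply: ele_trans (ele_eminr _ _) _; rewrite iidx_cand_S //.
by apply: ele_eadd (ele_refl _); apply: IHd; lia.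
Qed.

Section Attained.
Hypothesis a0_neq0 : a 0%N != 0.

Lemma iidx_cand_attained k : (k <= nu n p)%N ->
  exists h, a h != 0 /\ ele (iidx_cand k h) (iidx a n p e k).
Proof.
move Ed : (nu n p - k)%N => d; elim: d k Ed => [|d IHd] k Ed k_le.
  have -> : k = nu n p by lia.
  by exists 0%N; rewrite iidx_nu /iidx_cand add0n subnn.
rewrite iidxS; last lia.
case: (eminE (itilde a n p k) (eadd (iidx a n p e k.+1) e)) => ->.
  case: (itildeP k) => [->|[h [ah h_le ->]]]; first by exists 0%N; rewrite ele_inf.
  by exists h; split; rewrite // /iidx_cand (eqP h_le) /= addr0 lexx.
have [h [ah h_cand]] := IHd k.+1 ltac:(lia) ltac:(lia).
exists h; split => //; apply: ele_trans _ (ele_eadd h_cand (ele_refl e)).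
rewrite /iidx_cand -eaddA; apply: ele_eadd; first exact: ele_refl.
by rewrite -[eadd _ e]/(emuln (logn p (h + n) - k.+1).+1 e) ele_emuln //; lia.
Qed.

End Attained.

Section Phi.
Variables (R : realType) (x : R).
Hypotheses (p_gt0 : (0 < p)%N) (x_ge0 : 0 <= x).

Definition phi_line k (o : option int) : option R :=
  omap (fun i : int => i%:~R + (p ^ k)%N%:R * x) o.

Lemma ele_phi_line k o o' : ele o o' -> ele (phi_line k o) (phi_line k o').
Proof. by case: o => [u|]; case: o' => [w|] //=; rewrite lerD2r ler_int. Qed.

Lemma phi_line_leq k k' o : (k <= k')%N -> ele (phi_line k o) (phi_line k' o).
Proof.
case: o => [u|] //= le_kk'; rewrite lerD2l ler_wpM2r // ler_nat.
by rewrite leq_pexp2l.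
Qed.

(* [vbin j0 h] stands for v_L(binomial(h+n, p^j0)). *)
Variable vbin : nat -> nat -> option int.
Hypotheses (vbin_ge0 : forall j0 h, ele (Some 0) (vbin j0 h))
  (vbinE : forall j0 h, (j0 <= logn p (h + n))%N ->
     vbin j0 h = emuln (logn p (h + n) - j0) e).

Definition phi_term j0 h := phi_line j0 (eadd (Some h%:Z) (vbin j0 h)).

Lemma phi_term_minn j0 h :
  phi_term (minn j0 (logn p (h + n))) h = phi_line (minn j0 (logn p (h + n))) (iidx_cand j0 h).
Proof.
by rewrite /phi_term vbinE ?geq_minr // /iidx_cand subn_minr.
Qed.

Lemma phi_le_term j j0 h : (j <= nu n p)%N -> (j0 <= j)%N -> a h != 0 ->
  ele (phi a n p e j x) (phi_term j0 h).
Proof.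
move=> j_le j0_le ah; set k := minn j0 (logn p (h + n)).
have k_le : (k <= j)%N by rewrite /k; lia.
apply: ele_trans (foldr_emin_le (map_f _ _)) _; first by rewrite mem_iota; exact: k_le.
apply: ele_trans (ele_phi_line _ (iidx_le_cand (leq_trans k_le j_le) ah)) _.
have -> : iidx_cand k h = iidx_cand j0 h by rewrite /iidx_cand subn_minr.
apply: ele_trans (phi_line_leq _ (geq_minl j0 _)) _.
apply: ele_phi_line (ele_eadd (ele_refl _) _).
have [j0_le_v|j0_gt_v] := leqP j0 (logn p (h + n)); first by rewrite vbinE ?ele_refl.
by have -> : (logn p (h + n) - j0 = 0)%N by lia.
Qed.

Hypothesis a0_neq0 : a 0%N != 0.

Lemma term_le_phitilde k : (k <= nu n p)%N ->
  exists j0 h, [/\ (j0 <= k)%N, a h != 0 & ele (phi_term j0 h) (phitilde a n p e k x)].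
Proof.
move=> k_le; have [h [ah h_cand]] := iidx_cand_attained a0_neq0 k_le.
exists (minn k (logn p (h + n))), h; split; rewrite ?geq_minl //.
rewrite phi_term_minn; apply: ele_trans (phi_line_leq _ (geq_minl k _)) _.
exact: ele_phi_line.
Qed.

Lemma phi_attained j : (j <= nu n p)%N ->
  exists j0 h, [/\ (j0 <= j)%N, a h != 0 & phi a n p e j x = phi_term j0 h].
Proof.
move=> j_le; have /mapP[k] := foldr_emin_mem (s := [seq phitilde a n p e k x | k <- iota 0 j.+1]) isT.
rewrite mem_iota add0n ltnS => /andP[_ k_le] phiE.
have [j0 [h [j0_le ah term_le]]] := term_le_phitilde (leq_trans k_le j_le).
exists j0, h; split; rewrite ?(leq_trans j0_le k_le) //.
apply: ele_anti; first exact: phi_le_term (leq_trans j0_le k_le) ah.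
by rewrite /phi phiE.
Qed.

End Phi.
End Indices.

Theorem proposition2p2
  (p : nat) (K : fieldType) (vK : K -> option int)
  (L : fieldExtType K) (vL : L -> option int) (n : nat)
  (piK : K) (piL : L) (a : nat -> K) (R : realType)
  (hvK : is_dval vK) (hcomplete : dv_complete vK)
  (hres : residue_perfect_char vK p)
  (hsep : separable (1%VS : {vspace L}) fullv)
  (hdeg : \dim (fullv : {vspace L}) = n) (hn : (1 < n)%N)
  (hvL : is_dval vL)
  (htot : forall c : K, vL (c%:A) = omap (fun z : int => n%:Z * z) (vK c))
  (hpiK : vK piK = Some 1) (hpiL : vL piL = Some 1)
  (hteich : forall h, teichmuller vK p (a h))
  (hser : forall N : int, exists H0, forall H, (H0 <= H)%N ->
      ele (Some N) (vL (piK%:A - \sum_(h < H) (a h)%:A * piL ^+ (h + n)))) :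
  forall (j : nat) (x : R), (j <= logn p n)%N -> 0 <= x ->
    let T j0 h : option R :=
      omap (fun w : int => h%:R + w%:~R + (p ^ j0)%N%:R * x)
           (vL ('C(h + n, p ^ j0))%:R) in
    let ph := phi a n p (vL p%:R) j x in
    (exists j0 h, (j0 <= j)%N /\ a h != 0 /\ ph = T j0 h) /\
    (forall j0 h, (j0 <= j)%N -> a h != 0 -> ele ph (T j0 h)).
Proof.
move=> j x j_le x_ge0 T ph.
have [p_prime vKp_ge1 _] := hres.
have vLp_ge1 : ele (Some 1) (vL p%:R).
  by rewrite -scaler_nat htot; case: (vK p%:R) vKp_ge1 => //= z; nia.
have vLp_ge0 : ele (Some 0) (vL p%:R) := @ele_trans _ (Some 0) (Some 1) _ ler01 vLp_ge1.
have vL_piK : vL piK%:A = Some n%:Z by rewrite htot hpiK /= mulr1.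
have vL_a_ge0 h : ele (Some 0) (vL (a h)%:A).
  by rewrite htot; case: (hteich h) => + _; case: (vK (a h)) => //= z; nia.
have a0_neq0 : a 0%N != 0.
  apply: contraNneq (series_head_neq0 hvL hpiL vL_piK vL_a_ge0 hser) => ->.
  by rewrite scale0r.
have TE j0 h : T j0 h = phi_term p x (fun j0 h => vL ('C(h + n, p ^ j0))%:R) j0 h.
  by rewrite /T /phi_term /phi_line; case: (vL _) => //= w; rewrite intrD -pmulrn.
have vbinE j0 h : (j0 <= logn p (h + n))%N ->
    vL ('C(h + n, p ^ j0))%:R = emuln (logn p (h + n) - j0) (vL p%:R).
  by move=> j0_le; rewrite (dv_bin_pfactor hvL p_prime vLp_ge1) //; lia.
have vbin_ge0 j0 h : ele (Some 0) (vL ('C(h + n, p ^ j0))%:R) := dv_nat_ge0 hvL _.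
have p_gt0 := prime_gt0 p_prime.
split.
  have [j0 [h [j0_le ah phiE]]] := phi_attained vLp_ge0 p_gt0 x_ge0
    vbin_ge0 vbinE a0_neq0 j_le.
  by exists j0, h; rewrite /ph phiE TE.
move=> j0 h j0_le ah; rewrite /ph TE.
exact: (phi_le_term (a := a) vLp_ge0 p_gt0 x_ge0 vbin_ge0 vbinE j_le j0_le ah).
Qed.
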